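(* Suppose there is a norm $\|\cdot\|$ on $\mathbb R^n$ and constants $q\in(1,2]$, $L>0$ such that $f$ is $q$-uniformly smooth on $\mathrm{dom}(\Psi)$ with constant $L$, and let $p\ge2$, $\mu>0$. (a) If $\Psi$ is $p$-uniformly convex on $\mathrm{dom}(\Psi)$ with constant $\mu$, then $(\mathcal D,\mathrm{gap})$ satisfies the $(q,r)$-growth property with $r=q/p$ and $M=L(p/\mu)^{q/p}$. (b) If $\Psi=\delta_C$ for a closed convex set $C\subseteq\mathbb R^n$ that is $p$-uniformly convex with constant $\mu$, and $\ell:=\inf_{x\in C}\|\nabla f(x)\|^*>0$, then $(\mathcal D,\mathrm{gap})$ satisfies the $(q,r)$-growth property with $r=q/p$ and $M=L(p/(\ell\mu))^{q/p}$.
   Context: Let $f,\Psi:\mathbb{R}^n\to\mathbb{R}\cup\{\infty\}$ be closed proper convex functions such that (A1) $f$ is differentiable on $\mathrm{dom}(\Psi)$, and (A2) for every $x\in\mathrm{dom}(f)$ the set $\arg\min_s\{\langle\nabla f(x),s\rangle+\Psi(s)\}$ is nonempty. $f^*,\Psi^*$ denote convex conjugates; $\arg\min_y\{\langle g,y\rangle+\Psi(y)\}=\partial\Psi^*(-g)$. $D_f(y,x)=f(y)-f(x)-\langle\nabla f(x),y-x\rangle$. $\mathrm{gap}(x,u)=f(x)+\Psi(x)+f^*(u)+\Psi^*(-u)$. $\mathcal{D}(x,s,\theta)=D_f(x+\theta(s-x),x)+\Psi(x+\theta(s-x))-(1-\theta)\Psi(x)-\theta\Psi(s)$. $\|\cdot\|^*$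 is the dual norm. $(q,r)$-growth property: there is a finite $M>0$ such that for all $x\in\mathrm{dom}(\Psi)$, $g=\nabla f(x)$, $s\in\partial\Psi^*(-g)$: $\mathcal D(x,s,\theta)\le\frac{M\theta^q}{q}\mathrm{gap}(x,g)^r$ for all $\theta\in[0,1]$. $f$ is $q$-uniformly smooth on $C$ with constant $L$ if for all $x,y\in C$, $\theta\in[0,1]$: $f(x+\theta(y-x))\ge(1-\theta)f(x)+\theta f(y)-\frac Lq\theta(1-\theta)\|y-x\|^q$. $\Psi$ is $p$-uniformly convex on $C$ with constant $\mu$ if for all $x,y\in C$, $\theta\in[0,1]$: $\Psi(x+\theta(y-x))\le(1-\theta)\Psi(x)+\theta\Psi(y)-\frac\mu p\theta(1-\theta)\|y-x\|^p$. A closed convex set $C$ is $p$-uniformly convex with constant $\mu$ if for all $x,y\in C$, $\theta\in[0,1]$ and $\|z\|\le1$: $x+\theta(y-x)+\frac\mu p\theta(1-\theta)\|y-x\|^pz\in C$. *)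

From HB Require Import structures.
From mathcomp Require Import all_boot all_order all_algebra.
From mathcomp Require Import all_classical all_reals all_analysis.
Set Implicit Arguments. Unset Strict Implicit. Unset Printing Implicit Defensive.
Import Order.TTheory GRing.Theory Num.Theory.
Import numFieldNormedType.Exports.
Local Open Scope classical_set_scope.
Local Open Scope ring_scope.

Section Defs.
Variables (R : realType) (n : nat).
Notation vec := 'rV[R]_n.

Definition dot (u v : vec) : R := \sum_(i < n) u 0 i * v 0 i.

Definition is_norm (nrm : vec -> R) : Prop :=
  (forall x, nrm x = 0 -> x = 0) /\
  (forall (a : R) x, nrm (a *: x) = `|a| * nrm x) /\
  (forall x y, nrm (x + y) <= nrm x + nrm y).

Definition dual_norm (nrm : vec -> R) (g : vec) : R :=
  sup [set dot g x | x in [set x | nrm x <= 1]].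

Definition dom (h : vec -> \bar R) : set vec := [set x | (h x < +oo)%E].

Definition convex_fun (h : vec -> \bar R) : Prop :=
  forall (x y : vec) (t : R), 0 <= t <= 1 ->
    (h (x + t *: (y - x))%R <= (1 - t)%:E * h x + t%:E * h y)%E.

Definition proper_fun (h : vec -> \bar R) : Prop :=
  (forall x, h x != -oo%E) /\ exists x, (h x < +oo)%E.

(* closed = lower semicontinuous *)
Definition closed_fun (h : vec -> \bar R) : Prop :=
  forall x (a : R), (a%:E < h x)%E -> \forall y \near x, (a%:E < h y)%E.

Definition closed_proper_convex (h : vec -> \bar R) : Prop :=
  closed_fun h /\ proper_fun h /\ convex_fun h.

Definition is_gradient (h : vec -> \bar R) (x g : vec) : Prop :=
  (\forall y \near x, h y \is a fin_num) /\
  forall e : R, 0 < e -> \forall d \near (0 : vec),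
    `| fine (h (x + d)%R) - fine (h x) - dot g d | <= e * `|d|.

Definition conj (h : vec -> \bar R) (u : vec) : \bar R :=
  ereal_sup [set ((dot u x)%:E - h x)%E | x in [set: vec]].

(* arg min_s { <g,s> + Psi(s) }  ( = \partial Psi^*(-g) ) *)
Definition lmo (Psi : vec -> \bar R) (g : vec) : set vec :=
  [set s | (Psi s < +oo)%E /\
     forall y, ((dot g s)%:E + Psi s <= (dot g y)%:E + Psi y)%E].

Definition bregman (f : vec -> \bar R) (gradf : vec -> vec) (y x : vec) : \bar R :=
  (f y - f x - (dot (gradf x) (y - x)%R)%:E)%E.

Definition gap (f Psi : vec -> \bar R) (x u : vec) : \bar R :=
  (f x + Psi x + conj f u + conj Psi (- u)%R)%E.

Definition Dcal (f Psi : vec -> \bar R) (gradf : vec -> vec) (x s : vec) (t : R)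
  : \bar R :=
  (bregman f gradf (x + t *: (s - x))%R x + Psi (x + t *: (s - x))%R
     - (1 - t)%:E * Psi x - t%:E * Psi s)%E.

Definition growth_property (f Psi : vec -> \bar R) (gradf : vec -> vec)
  (q r M : R) : Prop :=
  forall x, dom Psi x -> forall s, lmo Psi (gradf x) s ->
    forall t : R, 0 <= t <= 1 ->
      (Dcal f Psi gradf x s t <=
         (M * t `^ q / q)%:E * (gap f Psi x (gradf x)) `^ r)%E.

Definition unif_smooth (nrm : vec -> R) (f : vec -> \bar R) (C : set vec)
  (q L : R) : Prop :=
  forall x y : vec, C x -> C y -> forall t : R, 0 <= t <= 1 ->
    (f (x + t *: (y - x))%R >=
      (1 - t)%:E * f x + t%:E * f y - (L / q * t * (1 - t) * nrm (y - x)%R `^ q)%:E)%E.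

Definition unif_convex_fun (nrm : vec -> R) (Psi : vec -> \bar R) (C : set vec)
  (p mu : R) : Prop :=
  forall x y : vec, C x -> C y -> forall t : R, 0 <= t <= 1 ->
    (Psi (x + t *: (y - x))%R <=
      (1 - t)%:E * Psi x + t%:E * Psi y - (mu / p * t * (1 - t) * nrm (y - x)%R `^ p)%:E)%E.

Definition cvx_set (C : set vec) : Prop :=
  forall (x y : vec) (t : R), C x -> C y -> 0 <= t <= 1 -> C (x + t *: (y - x)).

Definition unif_convex_set (nrm : vec -> R) (C : set vec) (p mu : R) : Prop :=
  forall (x y : vec) (t : R) z, C x -> C y -> 0 <= t <= 1 -> nrm z <= 1 ->
    C (x + t *: (y - x) + (mu / p * t * (1 - t) * nrm (y - x)%R `^ p) *: z).

Definition delta_ind (C : set vec) (x : vec) : \bar R :=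
  if x \in C then 0%E else +oo%E.

End Defs.

From HB Require Import structures.
From mathcomp Require Import all_boot all_order all_algebra.
From mathcomp Require Import all_classical all_reals all_analysis.
From mathcomp Require Import ring lra.
Import Order.TTheory GRing.Theory Num.Theory.
Import numFieldNormedType.Exports.
Local Open Scope classical_set_scope.
Local Open Scope ring_scope.

Set Implicit Arguments. Unset Strict Implicit.

(* With y = x + t (s - x) and N = ||s - x||, convexity of Psi and uniform
   smoothness of f give D(x, s, t) <= (L/q) (t N)^q, while Fenchel-Young bounds
   gap(x, g) below by the linearized gap <g, x - s> + Psi x - Psi s.  Since s
   minimizes <g, .> + Psi, comparing it with the point s + th (x - s) in case (a),
   or with the points s + th (x - s) - (mu/p) th (1 - th) N^p w of C, ||w|| <= 1,
   in case (b), and letting th -> 0 bounds the linearized gap below by (k/p) N^p,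
   with k = mu, resp. k = ell mu.  Eliminating N gives the growth property. *)

Lemma le_of_onemM_le (R : realFieldType) (a b : R) :
  (forall t, 0 < t < 1 -> (1 - t) * b <= a) -> b <= a.
Proof.
move=> H; apply/ler_addgt0Pr => e e0.
set t := e / (e + `|b| + 1).
have b0 := normr_ge0 b.
have ht : t * (e + `|b| + 1) = e by rewrite /t mulfVK // gt_eqF //; lra.
have t0 : 0 < t by rewrite /t divr_gt0 //; lra.
have := H t; have := ler_norm b; nra.
Qed.

Lemma gt0_inf_lbound (R : realType) (E : set R) : 0 < inf E -> lbound E (inf E).
Proof.
(* [inf] is [0] on sets without a lower bound *)
move=> inf0; apply: ge_inf; apply: contrapT => nlb.
have : inf E = 0 by apply: inf_out => -[].
by move: inf0 => /[swap] ->; rewrite ltxx.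
Qed.

Section Growth.
Variables (R : realType) (n : nat).
Notation vec := 'rV[R]_n.
Implicit Types (f h Psi : vec -> \bar R) (g x y s d w : vec) (C : set vec).

Lemma dotDr g x y : dot g (x + y) = dot g x + dot g y.
Proof. by rewrite /dot -big_split; apply: eq_bigr => i _; rewrite mxE mulrDr. Qed.

Lemma dotZr g x c : dot g (c *: x) = c * dot g x.
Proof. by rewrite /dot mulr_sumr; apply: eq_bigr => i _; rewrite mxE mulrCA. Qed.

Lemma dotNr g x : dot g (- x) = - dot g x.
Proof. by rewrite -scaleN1r dotZr mulN1r. Qed.

Lemma dotBr g x y : dot g (x - y) = dot g x - dot g y.
Proof. by rewrite dotDr dotNr. Qed.

Lemma dotNl g x : dot (- g) x = - dot g x.
Proof. by rewrite /dot -sumrN; apply: eq_bigr => i _; rewrite mxE mulNr. Qed.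

Lemma gradient_fin_num h x g : is_gradient h x g -> h x \is a fin_num.
Proof. by move=> [/nbhs_singleton]. Qed.

Lemma dom_delta_ind C : dom (delta_ind C) = C.
Proof.
rewrite /dom /delta_ind; apply/seteqP; split => z /=.
  by case: ifPn => [/set_mem|].
by move=> Cz; rewrite mem_set.
Qed.

Lemma lmo_delta_ind C g s :
  lmo (delta_ind C) g s -> C s /\ forall y, C y -> dot g s <= dot g y.
Proof.
move=> [hs opt]; have Cs : C s by rewrite -(dom_delta_ind C).
split => // y Cy; move: (opt y).
by rewrite /delta_ind !mem_set // !adde0 lee_fin.
Qed.

Lemma dom_fin_num Psi x : (forall z, Psi z != -oo%E) -> dom Psi x -> Psi x \is a fin_num.
Proof. by move=> Pninf hx; rewrite fin_numE Pninf lt_eqF. Qed.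

Definition linearized_gap Psi g x s : R :=
  dot g (x - s) + fine (Psi x) - fine (Psi s).

Lemma gap_ge_linearized_gap f Psi g x s :
  f x \is a fin_num -> Psi x \is a fin_num -> Psi s \is a fin_num ->
  ((linearized_gap Psi g x s)%:E <= gap f Psi x g)%E.
Proof.
move=> fx Px Ps.
have conj_f : ((dot g x - fine (f x))%:E <= conj f g)%E.
  by apply: ereal_sup_ubound; exists x => //; rewrite EFinB fineK.
have conj_Psi : ((- dot g s - fine (Psi s))%:E <= conj Psi (- g))%E.
  by apply: ereal_sup_ubound; exists s => //; rewrite dotNl EFinB fineK.
rewrite /gap; apply: le_trans (leeD (leeD (lexx _) conj_f) conj_Psi).
rewrite -(fineK fx) -(fineK Px) -!EFinD lee_fin /linearized_gap dotBr; lra.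
Qed.

Section Norm.
Variable nrm : vec -> R.
Hypothesis hnrm : is_norm nrm.

Lemma nrm0 : nrm 0 = 0.
Proof. by case: hnrm => _ [hZ _]; rewrite -(scale0r 0) hZ normr0 mul0r. Qed.

Lemma nrmN x : nrm (- x) = nrm x.
Proof. by case: hnrm => _ [hZ _]; rewrite -scaleN1r hZ normrN normr1 mul1r. Qed.

Lemma nrm_ge0 x : 0 <= nrm x.
Proof. by have := hnrm.2.2 x (- x); rewrite subrr nrm0 nrmN; lra. Qed.

Lemma nrmZ x c : 0 <= c -> nrm (c *: x) = c * nrm x.
Proof. by case: hnrm => _ [hZ _] c0; rewrite hZ ger0_norm. Qed.

Lemma dual_norm_le g b : (forall w, nrm w <= 1 -> dot g w <= b) -> dual_norm nrm g <= b.
Proof.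
move=> ub; apply: ge_sup; first by exists (dot g 0), 0; rewrite //= nrm0.
by move=> _ [w w1 <-]; exact: ub.
Qed.

Lemma unif_convex_fun_linearized_gap Psi C p mu g x s :
  unif_convex_fun nrm Psi C p mu -> C x -> C s ->
  Psi x \is a fin_num -> Psi s \is a fin_num ->
  (forall y, ((dot g s)%:E + Psi s <= (dot g y)%:E + Psi y)%E) ->
  mu / p * nrm (s - x) `^ p <= linearized_gap Psi g x s.
Proof.
move=> hUC Cx Cs Px Ps opt; apply: le_of_onemM_le => th /andP[th0 th1].
have := hUC s x Cs Cx th; rewrite ltW // ltW // => /(_ isT).
have := opt (s + th *: (x - s)).
rewrite -(fineK Px) -(fineK Ps) -!EFinM -!EFinD -opprB nrmN.
case: (Psi (s + _)) => [u| |] //; rewrite -?EFinD !lee_fin dotDr dotZr dotNr => hopt huc.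
rewrite -(ler_pM2l th0) /linearized_gap dotBr.
have -> : th * ((1 - th) * (mu / p * nrm (s - x) `^ p)) =
          mu / p * th * (1 - th) * nrm (s - x) `^ p by ring.
rewrite dotBr in hopt; lra.
Qed.

Lemma unif_convex_set_dual_norm C p mu g x s :
  unif_convex_set nrm C p mu -> 0 <= mu / p -> C x -> C s ->
  (forall y, C y -> dot g s <= dot g y) ->
  dual_norm nrm g * (mu / p * nrm (s - x) `^ p) <= dot g (x - s).
Proof.
move=> hC mup Cx Cs opt.
set c := mu / p * nrm (s - x) `^ p.
have A0 : 0 <= dot g (x - s) by rewrite dotBr subr_ge0 opt.
have c0 : 0 <= c by rewrite mulr_ge0 ?powR_ge0.
have push w : nrm w <= 1 -> dot g w * c <= dot g (x - s).
  move=> w1; apply: le_of_onemM_le => th /andP[th0 th1].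
  have th01 : 0 <= th <= 1 by rewrite !ltW.
  have Nw1 : nrm (- w) <= 1 by rewrite nrmN.
  have hz := opt _ (hC s x th (- w) Cs Cx th01 Nw1).
  have E : mu / p * th * (1 - th) * nrm (x - s) `^ p = th * (1 - th) * c.
    by rewrite -[x - s]opprB nrmN /c; ring.
  rewrite !dotDr !dotZr dotNr E in hz.
  by rewrite -(ler_pM2l th0); lra.
have [->|cN0] := eqVneq c 0; first by rewrite mulr0.
have cp : 0 < c by rewrite lt0r cN0.
rewrite -ler_pdivlMr //; apply: dual_norm_le => w w1.
by rewrite ler_pdivlMr // push.
Qed.

End Norm.

Section Smoothness.
Variables (f : vec -> \bar R) (gradf : vec -> vec) (nrm : vec -> R) (q L : R).

Lemma gradient_secant (h : vec -> \bar R) x g d e :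
  is_gradient h x g -> 0 < e ->
  exists t, [/\ 0 < t < 1, h (x + t *: d) \is a fin_num &
    fine (h (x + t *: d)) - fine (h x) <= t * (dot g d + e)].
Proof.
move=> [hfin hdiff] e0.
have d0 := normr_ge0 d.
set e' := e / (`|d| + 1).
have he' : e' * (`|d| + 1) = e by rewrite /e' mulfVK // gt_eqF // ltr_wpDl.
have e'0 : 0 < e' by rewrite divr_gt0 // ltr_wpDl.
have : \forall u \near (0 : vec), h (x + u) \is a fin_num /\
    `|fine (h (x + u)) - fine (h x) - dot g u| <= e' * `|u|.
  by apply: filterS2 ((nbhs0P _ x).1 hfin) (hdiff _ e'0) => u.
move=> /nbhs_norm0P [r /= r0 hr].
set t := r / (r + `|d| + 1).
have ht : t * (r + `|d| + 1) = r by rewrite /t mulfVK // gt_eqF //; lra.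
have t0 : 0 < t by rewrite /t divr_gt0 //; lra.
have td : `|t *: d| < r by rewrite normrZ gtr0_norm //; nra.
have [fin] := hr (t *: d) td.
rewrite dotZr normrZ gtr0_norm // => hle.
exists t; split => //; first by apply/andP; split => //; nra.
have := ler_norm (fine (h (x + t *: d)) - fine (h x) - t * dot g d); nra.
Qed.

Lemma bregman_le_unif_smooth C x y :
  unif_smooth nrm f C q L -> 0 <= L / q -> C x -> C y ->
  is_gradient f x (gradf x) -> f y \is a fin_num ->
  (bregman f gradf y x <= (L / q * nrm (y - x) `^ q)%:E)%E.
Proof.
move=> hsmooth Lq0 Cx Cy hgrad fy.
have fx := gradient_fin_num hgrad.
rewrite /bregman -(fineK fx) -(fineK fy) -!EFinB lee_fin.
set K := L / q * nrm (y - x) `^ q.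
have K0 : 0 <= K by rewrite mulr_ge0 ?powR_ge0.
apply/ler_addgt0Pr => e e0.
have [t [/andP[t0 t1] ft ht]] := gradient_secant (y - x) hgrad e0.
have := hsmooth x y Cx Cy t; rewrite ltW // ltW // => /(_ isT) hs.
rewrite -(fineK ft) -(fineK fx) -(fineK fy) -!EFinM -EFinD lee_fin in hs.
have E : L / q * t * (1 - t) * nrm (y - x) `^ q = t * K - t * t * K by rewrite /K; ring.
rewrite -(ler_pM2l t0); nra.
Qed.

Lemma Dcal_le_unif_smooth Psi x s t :
  is_norm nrm -> convex_fun Psi -> (forall z, Psi z != -oo%E) ->
  (forall z, dom Psi z -> is_gradient f z (gradf z)) ->
  unif_smooth nrm f (dom Psi) q L -> 0 <= L / q ->
  dom Psi x -> dom Psi s -> 0 <= t <= 1 ->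
  (Dcal f Psi gradf x s t <= (L / q * (t * nrm (s - x)) `^ q)%:E)%E.
Proof.
move=> hnrm hcvx Pninf grad hsmooth Lq0 hx hs ht.
have fin z : dom Psi z -> Psi z \is a fin_num := dom_fin_num Pninf.
set y := x + t *: (s - x).
have hcvx_y := hcvx x s t ht.
rewrite -(fineK (fin x hx)) -(fineK (fin s hs)) -!EFinM -!EFinD in hcvx_y.
have hy : dom Psi y by apply: le_lt_trans hcvx_y (ltry _).
have := bregman_le_unif_smooth hsmooth Lq0 hx hy (grad x hx)
  (gradient_fin_num (grad y hy)).
have -> : nrm (y - x) = t * nrm (s - x) by rewrite /y addrC addKr nrmZ //; case/andP: ht.
rewrite /Dcal -/y -(fineK (fin y hy)) -(fineK (fin x hx)) -(fineK (fin s hs)) in hcvx_y *.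
case: (bregman _ _ _ _) => [b| |] //; rewrite -!EFinM -!EFinD !lee_fin in hcvx_y *; lra.
Qed.

Lemma le_growth_bound (D G : \bar R) (p k t N : R) :
  0 <= L -> 0 <= q -> 0 < p -> 0 < k -> 0 <= t -> 0 <= N ->
  (D <= (L / q * (t * N) `^ q)%:E)%E -> ((k / p * N `^ p)%:E <= G)%E ->
  (D <= (L * (p / k) `^ (q / p) * t `^ q / q)%:E * G `^ (q / p))%E.
Proof.
move=> L0 q0 p0 k0 t0 N0 hD hG.
have kpN : (k / p * N `^ p) `^ (q / p) = (k / p) `^ (q / p) * N `^ q.
  by rewrite powRM ?powR_ge0 ?divr_ge0 ?ltW // -powRrM [p * _]mulrC divfK ?gt_eqF.
have pkkp : (p / k) `^ (q / p) * (k / p) `^ (q / p) = 1.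
  by rewrite -powRM ?divr_ge0 ?ltW // mulrA divfK ?divff ?gt_eqF ?powR1.
apply: le_trans hD _.
have -> : L / q * (t * N) `^ q =
    L * (p / k) `^ (q / p) * t `^ q / q * (k / p * N `^ p) `^ (q / p).
  by rewrite kpN powRM // -[LHS]mulr1 -pkkp; ring.
rewrite EFinM -poweR_EFin.
apply: lee_wpmul2l; first by rewrite lee_fin !mulr_ge0 ?powR_ge0 ?invr_ge0.
apply: gt0_ler_poweR => //; first by rewrite divr_ge0 // ltW.
- by rewrite in_itv /= leey lee_fin mulr_ge0 ?powR_ge0 // divr_ge0 // ltW.
- by rewrite in_itv /= leey (le_trans _ hG) // lee_fin mulr_ge0 ?powR_ge0 // divr_ge0 // ltW.
Qed.

Lemma growth_property_of_gap_ge Psi p k :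
  is_norm nrm -> convex_fun Psi -> (forall z, Psi z != -oo%E) ->
  (forall z, dom Psi z -> is_gradient f z (gradf z)) ->
  unif_smooth nrm f (dom Psi) q L -> 0 <= L -> 0 < q -> 0 < p -> 0 < k ->
  (forall x s, dom Psi x -> lmo Psi (gradf x) s ->
     ((k / p * nrm (s - x) `^ p)%:E <= gap f Psi x (gradf x))%E) ->
  growth_property f Psi gradf q (q / p) (L * (p / k) `^ (q / p)).
Proof.
move=> hnrm hcvx Pninf grad hsmooth L0 q0 p0 k0 hgap x hx s hs t ht.
have [t0 _] := andP ht.
apply: (le_growth_bound L0 (ltW q0) p0 k0 t0 (nrm_ge0 hnrm _) _ (hgap x s hx hs)).
by apply: Dcal_le_unif_smooth hs.1 ht => //; rewrite divr_ge0 // ltW.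
Qed.

End Smoothness.
End Growth.

Theorem proposition4 (R : realType) (n : nat)
  (f Psi : 'rV[R]_n -> \bar R) (gradf : 'rV[R]_n -> 'rV[R]_n)
  (hf : closed_proper_convex f) (hPsi : closed_proper_convex Psi)
  (A1 : forall x, dom Psi x -> is_gradient f x (gradf x))
  (A2 : forall x, dom Psi x -> exists s, lmo Psi (gradf x) s)
  (nrm : 'rV[R]_n -> R) (hnrm : is_norm nrm)
  (q L : R) (hq : 1 < q <= 2) (hL : 0 < L)
  (hsmooth : unif_smooth nrm f (dom Psi) q L)
  (p mu : R) (hp : 2 <= p) (hmu : 0 < mu) :
  (unif_convex_fun nrm Psi (dom Psi) p mu ->
     growth_property f Psi gradf q (q / p) (L * (p / mu) `^ (q / p))) /\
  (forall C : set 'rV[R]_n, closed C -> cvx_set C ->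
     Psi = delta_ind C -> unif_convex_set nrm C p mu ->
     let ell := inf [set dual_norm nrm (gradf x) | x in C] in
     0 < ell ->
     growth_property f Psi gradf q (q / p) (L * (p / (ell * mu)) `^ (q / p))).
Proof.
have [_ [[Pninf _] hcvx]] := hPsi.
have q0 : 0 < q by lra.
have p0 : 0 < p by lra.
have fin z : dom Psi z -> Psi z \is a fin_num := dom_fin_num Pninf.
split.
- move=> hUC.
  apply: (growth_property_of_gap_ge hnrm hcvx Pninf A1 hsmooth (ltW hL) q0 p0 hmu).
  move=> x s hx [hs opt].
  apply: le_trans (gap_ge_linearized_gap _ (gradient_fin_num (A1 x hx)) (fin x hx) (fin s hs)).
  by rewrite lee_fin (unif_convex_fun_linearized_gap hnrm hUC hx hs (fin x hx) (fin s hs) opt).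
- move=> C _ _ EPsi hC ell ell0; subst Psi.
  have ellmu : 0 < ell * mu by rewrite mulr_gt0.
  apply: (growth_property_of_gap_ge hnrm hcvx Pninf A1 hsmooth (ltW hL) q0 p0 ellmu).
  move=> x s; rewrite dom_delta_ind => Cx /lmo_delta_ind [Cs opt].
  have hx : dom (delta_ind C) x by rewrite dom_delta_ind.
  have hs : dom (delta_ind C) s by rewrite dom_delta_ind.
  apply: le_trans (gap_ge_linearized_gap _ (gradient_fin_num (A1 x hx)) (fin x hx) (fin s hs)).
  rewrite /linearized_gap /delta_ind !mem_set //= subr0 addr0 lee_fin.
  have mup : 0 <= mu / p by rewrite divr_ge0 // ltW.
  apply: le_trans (unif_convex_set_dual_norm hnrm hC mup Cx Cs opt).
  have -> : ell * mu / p * nrm (s - x) `^ p = ell * (mu / p * nrm (s - x) `^ p) by ring.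
  rewrite ler_wpM2r ?(mulr_ge0 mup) ?powR_ge0 //.
  by apply: (gt0_inf_lbound ell0); exists x.
Qed.
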